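(* If $\alpha$ is a half-space quasiorder on a set $A$, then there exist linear orders $R_1,R_2$ on $A/(\alpha\cap\alpha^{-1})$ with $r_\alpha=R_1\cap R_2$; in particular the partial order $r_\alpha$ has order dimension at most $2$.
   Context: A quasiorder on $A$ is a reflexive and transitive relation; $\Delta_A=\{(a,a)\mid a\in A\}$. A quasiorder $\alpha$ on $A$ is a half-space if there is a quasiorder $\beta$ on $A$ with $\alpha\cup\beta=A\times A$ and $\alpha\cap\beta=\Delta_A$. For a quasiorder $\gamma$, $r_\gamma$ is the induced partial order on $A/(\gamma\cap\gamma^{-1})$: $([a],[b])\in r_\gamma$ iff $(a,b)\in\gamma$. The order dimension of a partial order is the least cardinality of a set of linear extensions of it whose intersection is the partial order. *)

From Stdlib Require Import List.
Import ListNotations.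

Definition relation (X : Type) := X -> X -> Prop.

Definition reflexive {X} (r : relation X) := forall x, r x x.
Definition transitive {X} (r : relation X) := forall x y z, r x y -> r y z -> r x z.
Definition antisymmetric {X} (r : relation X) := forall x y, r x y -> r y x -> x = y.
Definition total {X} (r : relation X) := forall x y, r x y \/ r y x.

Definition quasiorder {X} (r : relation X) := reflexive r /\ transitive r.
Definition partial_order {X} (r : relation X) := quasiorder r /\ antisymmetric r.
Definition linear_order {X} (r : relation X) := partial_order r /\ total r.

Definition half_space {A} (alpha : relation A) :=
  quasiorder alpha /\
  exists beta : relation A, quasiorder beta /\
    (forall a b, alpha a b \/ beta a b) /\
    (forall a b, (alpha a b /\ beta a b) <-> a = b).

Definition kerrel {A} (gamma : relation A) : relation A :=
  fun a b => gamma a b /\ gamma b a.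

(* the quotient A/(gamma ∩ gamma^{-1}), as the type of equivalence classes *)
Definition eqclass {A} (gamma : relation A) (S : A -> Prop) :=
  exists a, forall b, S b <-> kerrel gamma a b.

Definition quot {A} (gamma : relation A) := { S : A -> Prop | eqclass gamma S }.

Definition class_of {A} (gamma : relation A) (S : quot gamma) : A -> Prop :=
  proj1_sig S.

Definition r_ {A} (gamma : relation A) : relation (quot gamma) :=
  fun X Y => exists a b, class_of gamma X a /\ class_of gamma Y b /\ gamma a b.

Definition linear_extension {X} (r R : relation X) :=
  linear_order R /\ (forall x y, r x y -> R x y).

Definition order_dim_le {X} (r : relation X) (n : nat) :=
  exists Rs : list (relation X), length Rs <= n /\
    (forall R, In R Rs -> linear_extension r R) /\
    (forall x y, r x y <-> (forall R, In R Rs -> R x y)).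

(** Incomparability in [r_alpha] is transitive up to equality: two
    [alpha]-incomparable elements are related both ways by the complementary
    quasiorder [beta], hence so are [a] and [c] whenever [a ~ b ~ c], and then
    [alpha a c] would force [a = c] since [alpha ∩ beta] is the diagonal.  For a
    partial order [r] with this property and any linear order [W], "[r], and [W]
    on incomparable pairs" is a linear extension of [r]; the extensions built
    from [W] and from its converse meet in [r]. *)

From Pilot Require Import Defs.
From Stdlib Require Import List Classical FunctionalExtensionality
  PropExtensionality ProofIrrelevance.
From mathcomp Require all_boot boolp wochoice.
Import ListNotations.

Module LinearOrderExistence.
Import all_boot boolp wochoice.

Lemma exists_linear_order (T : Type) :
  exists W : Pilot.Defs.relation T, Pilot.Defs.linear_order W.
Proof.
have [R wR] := well_ordering_principle {classic T}.
have woR : wo_chain R predT by move=> A _; apply: wR.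
have le_total x y : R x y \/ R y x by apply/orP; exact: wo_chainW woR x y isT isT.
have le_anti x y : R x y -> R y x -> x = y.
  by move=> Rxy Ryx; apply: (wo_chain_antisymmetric woR) => //; rewrite Rxy Ryx.
have le_refl x : R x x by case: (le_total x x).
(* The least of [x], [y], [z] lies below the other two. *)
have le_trans x y z : R x y -> R y z -> R x z.
  move=> Rxy Ryz; have xP : x \in pred3 x y z by rewrite !inE eqxx.
  have [m [[mP m_min] _]] := wR _ (ex_intro _ x xP).
  have := m_min z; rewrite !inE eqxx !orbT => /(_ isT) Rmz.
  case/or3P: mP => /eqP m_eq; subst m => //.
  - have Ryx : R y x by apply: m_min; rewrite !inE eqxx.
    by rewrite (le_anti x y).
  - have Rzy : R z y by apply: m_min; rewrite !inE eqxx orbT.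
    by rewrite -(le_anti y z).
exists (fun x y => R x y); split; [split; [split|]|].
- exact: le_refl.
- exact: le_trans.
- exact: le_anti.
- exact: le_total.
Qed.

End LinearOrderExistence.

Import LinearOrderExistence.

Definition converse {X} (R : relation X) : relation X := fun x y => R y x.

Definition incomparable {X} (r : relation X) (x y : X) := ~ r x y /\ ~ r y x.

Lemma linear_order_converse {X} (R : relation X) :
  linear_order R -> linear_order (converse R).
Proof.
  intros [[[Rrefl Rtrans] Ranti] Rtot]; unfold converse.
  repeat split; [intro x | intros x y z Hxy Hyz | intros x y Hxy Hyx | intros x y].
  - apply Rrefl.
  - eauto.
  - auto.
  - apply Rtot.
Qed.

Lemma order_dim_le_2_of_meet {X} (r R1 R2 : relation X) :
  linear_order R1 -> linear_order R2 ->
  (forall x y, r x y <-> R1 x y /\ R2 x y) ->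
  order_dim_le r 2.
Proof.
  intros L1 L2 Hmeet.
  exists [R1; R2]; split; [simpl; auto | split].
  - intros R [<- | [<- | []]]; split; auto; intros x y Hxy; apply Hmeet in Hxy; tauto.
  - intros x y; rewrite Hmeet; split.
    + intros [H1 H2] R [<- | [<- | []]]; auto.
    + intros H; split; apply H; simpl; auto.
Qed.

Section TransitiveIncomparability.

Variables (X : Type) (r : relation X).
Hypothesis r_po : partial_order r.
Hypothesis incomparable_trans : forall x y z,
  incomparable r x y -> incomparable r y z -> x = z \/ incomparable r x z.

Definition lex_extension (W : relation X) : relation X :=
  fun x y => r x y \/ (incomparable r x y /\ W x y).

Lemma lex_extension_trans (W : relation X) :
  transitive W -> transitive (lex_extension W).
Proof.
  destruct r_po as [[rrefl rtrans] _]; intros Wtrans x y z.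
  intros [rxy | [Ixy Wxy]] [ryz | [Iyz Wyz]]; unfold lex_extension.
  - eauto.
  - destruct (classic (r x z)) as [rxz | nrxz]; [now left |].
    destruct (classic (r z x)) as [rzx | nrzx].
    + exfalso; apply (proj2 Iyz); eauto.
    + destruct (incomparable_trans x z y (conj nrxz nrzx)
                  (conj (proj2 Iyz) (proj1 Iyz))) as [-> | Ixy]; [now right |].
      now destruct Ixy.
  - destruct (classic (r x z)) as [rxz | nrxz]; [now left |].
    destruct (classic (r z x)) as [rzx | nrzx].
    + exfalso; apply (proj2 Ixy); eauto.
    + destruct (incomparable_trans y x z (conj (proj2 Ixy) (proj1 Ixy))
                  (conj nrxz nrzx)) as [<- | Iyz]; [now right |].
      now destruct Iyz.
  - destruct (incomparable_trans x y z Ixy Iyz) as [<- | Ixz].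
    + left; apply rrefl.
    + right; eauto.
Qed.

Lemma lex_extension_linear (W : relation X) :
  linear_order W -> linear_order (lex_extension W).
Proof.
  destruct r_po as [[rrefl _] ranti].
  intros [[[_ Wtrans] Wanti] Wtot]; unfold lex_extension.
  split; [split; [split |] |].
  - intro x; left; apply rrefl.
  - apply lex_extension_trans, Wtrans.
  - intros x y [rxy | [Ixy Wxy]] [ryx | [Iyx Wyx]].
    + now apply ranti.
    + now destruct Iyx.
    + now destruct Ixy.
    + now apply Wanti.
  - intros x y.
    destruct (classic (r x y)) as [rxy | nrxy]; [now left; left |].
    destruct (classic (r y x)) as [ryx | nryx]; [now right; left |].
    destruct (Wtot x y); [left | right]; right; repeat split; auto.
Qed.

Lemma lex_extension_meet_converse (W : relation X) :
  antisymmetric W ->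
  forall x y, r x y <-> lex_extension W x y /\ lex_extension (converse W) x y.
Proof.
  destruct r_po as [[rrefl _] _]; intros Wanti x y; split.
  - intro rxy; split; now left.
  - intros [[rxy | [_ Wxy]] [rxy' | [_ Wyx]]]; auto.
    rewrite (Wanti x y Wxy Wyx); apply rrefl.
Qed.

Lemma two_linear_orders_meet :
  exists R1 R2 : relation X,
    linear_order R1 /\ linear_order R2 /\ (forall x y, r x y <-> R1 x y /\ R2 x y).
Proof.
  destruct (exists_linear_order X) as [W LW].
  exists (lex_extension W), (lex_extension (converse W)).
  split; [| split].
  - now apply lex_extension_linear.
  - now apply lex_extension_linear, linear_order_converse.
  - apply lex_extension_meet_converse, LW.
Qed.

End TransitiveIncomparability.

Section Quotient.

Variables (A : Type) (alpha : relation A).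
Hypothesis alpha_qo : quasiorder alpha.

Definition represents (C : quot alpha) (a : A) :=
  forall b, class_of alpha C b <-> kerrel alpha a b.

Lemma quot_has_rep (C : quot alpha) : exists a, represents C a.
Proof. destruct C as [S [a Ha]]; now exists a. Qed.

Lemma r_rep (C D : quot alpha) (a b : A) :
  represents C a -> represents D b -> (r_ alpha C D <-> alpha a b).
Proof.
  destruct alpha_qo as [arefl atrans]; intros HC HD; split.
  - intros [a' [b' [Ca' [Db' ra'b']]]].
    apply HC in Ca'; apply HD in Db'; destruct Ca', Db'; eauto.
  - intro rab; exists a, b; repeat split; auto; [apply HC | apply HD];
      split; apply arefl.
Qed.

Lemma quot_eq_rep (C D : quot alpha) (a b : A) :
  represents C a -> represents D b -> kerrel alpha a b -> C = D.
Proof.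
  destruct alpha_qo as [_ atrans].
  destruct C as [S HS], D as [S' HS']; unfold represents; simpl.
  intros HC HD [rab rba].
  assert (S = S') as <-.
  { apply functional_extensionality; intro c; apply propositional_extensionality.
    rewrite HC, HD; unfold kerrel; split; intros [H1 H2]; split; eauto. }
  f_equal; apply proof_irrelevance.
Qed.

Lemma r_partial_order : partial_order (r_ alpha).
Proof.
  destruct alpha_qo as [arefl atrans].
  split; [split |].
  - intro C; destruct (quot_has_rep C) as [a Ha].
    apply (r_rep C C a a Ha Ha), arefl.
  - intros C D E.
    destruct (quot_has_rep C) as [a Ha], (quot_has_rep D) as [b Hb],
      (quot_has_rep E) as [c Hc].
    rewrite (r_rep C D a b Ha Hb), (r_rep D E b c Hb Hc), (r_rep C E a c Ha Hc).
    eauto.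
  - intros C D; destruct (quot_has_rep C) as [a Ha], (quot_has_rep D) as [b Hb].
    rewrite (r_rep C D a b Ha Hb), (r_rep D C b a Hb Ha); intros rab rba.
    now apply (quot_eq_rep C D a b Ha Hb).
Qed.

Lemma incomparable_rep (C D : quot alpha) (a b : A) :
  represents C a -> represents D b ->
  (incomparable (r_ alpha) C D <-> incomparable alpha a b).
Proof.
  intros Ha Hb; unfold incomparable.
  now rewrite (r_rep C D a b Ha Hb), (r_rep D C b a Hb Ha).
Qed.

Lemma r_incomparable_trans :
  (forall a b c, incomparable alpha a b -> incomparable alpha b c ->
     a = c \/ incomparable alpha a c) ->
  forall C D E, incomparable (r_ alpha) C D -> incomparable (r_ alpha) D E ->
    C = E \/ incomparable (r_ alpha) C E.
Proof.
  intros Htrans C D E.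
  destruct (quot_has_rep C) as [a Ha], (quot_has_rep D) as [b Hb],
    (quot_has_rep E) as [c Hc].
  rewrite (incomparable_rep C D a b Ha Hb), (incomparable_rep D E b c Hb Hc),
    (incomparable_rep C E a c Ha Hc).
  intros Iab Ibc; destruct (Htrans a b c Iab Ibc) as [<- | Iac]; [left | now right].
  apply (quot_eq_rep C E a a Ha Hc); split; apply (proj1 alpha_qo).
Qed.

End Quotient.

Lemma half_space_incomparable_trans {A} (alpha : relation A) :
  half_space alpha ->
  forall a b c, incomparable alpha a b -> incomparable alpha b c ->
    a = c \/ incomparable alpha a c.
Proof.
  intros [_ [beta [[_ btrans] [Hcover Hdiag]]]] a b c [nab nba] [nbc ncb].
  assert (Hbeta : forall x y, ~ alpha x y -> beta x y)
    by (intros x y nxy; destruct (Hcover x y); tauto).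
  assert (bac : beta a c) by (apply (btrans a b c); auto).
  assert (bca : beta c a) by (apply (btrans c b a); auto).
  destruct (classic (alpha a c)) as [rac | nac]; [left; now apply Hdiag |].
  destruct (classic (alpha c a)) as [rca | nca]; [left; symmetry; now apply Hdiag |].
  now right.
Qed.

Theorem corollary2p6 (A : Type) (alpha : relation A) :
  half_space alpha ->
  (exists R1 R2 : relation (quot alpha),
      linear_order R1 /\ linear_order R2 /\
      (forall X Y, r_ alpha X Y <-> (R1 X Y /\ R2 X Y)))
  /\ order_dim_le (r_ alpha) 2.
Proof.
  intros Hhalf.
  assert (Hmeet := two_linear_orders_meet (quot alpha) (r_ alpha)
    (r_partial_order A alpha (proj1 Hhalf))
    (r_incomparable_trans A alpha (proj1 Hhalf)
       (half_space_incomparable_trans alpha Hhalf))).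
  split; [exact Hmeet |].
  destruct Hmeet as [R1 [R2 [L1 [L2 Hr]]]].
  exact (order_dim_le_2_of_meet _ R1 R2 L1 L2 Hr).
Qed.
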